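(* Let $(G,E)$ be a connected simple graph with countable vertex set, $\mu$ a conductance, and $d$ a metric on $G$. Assume (E($\beta$)): there is $r_0>0$ with $\mathbb{E}^x[\tau(x,r)]\asymp r^\beta$ for all $x\in G$ and $r>r_0$; and (VG($\alpha$)): $V_d(x,r)\le C(r/s)^\alpha V_d(x,s)$ for all $x$ and $r>s>0$. Then there exists $c>0$ such that $h_{2n}(x,x)\ge c/V_d(x,n^{1/\beta})$ for all $x\in G$ and $n\ge1$.
   Context: $\mu_x=\sum_{y\sim x}\mu_{xy}$, $V_d(x,r)=\sum_{y\in B_d(x,r)}\mu_y$. $(X_n)$ is the random walk with transition probabilities $p(x,y)=\mu_{xy}/\mu_x$, $\mathbb{P}^x,\mathbb{E}^x$ its law and expectation started at $x$, $p_n(x,y)=\mathbb{P}^x(X_n=y)$, $h_n(x,y)=p_n(x,y)/\mu_y$. $\tau(x,r)=\min\{n:X_n\notin B_d(x,r)\}$. *)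

From mathcomp Require Import all_boot all_order all_algebra.
From mathcomp Require Import all_classical all_reals all_analysis.
Set Implicit Arguments. Unset Strict Implicit. Unset Printing Implicit Defensive.
Import Order.TTheory GRing.Theory Num.Theory.
Local Open Scope classical_set_scope.
Local Open Scope ring_scope.

Section Walk.
Variables (R : realType) (V : countType).

Inductive reach (E : V -> V -> Prop) : V -> V -> Prop :=
| reach_refl x : reach E x x
| reach_step x y z : E x y -> reach E y z -> reach E x z.

Definition simple_graph (E : V -> V -> Prop) : Prop :=
  (forall x, ~ E x x) /\ (forall x y, E x y -> E y x).

Definition connected_graph (E : V -> V -> Prop) : Prop :=
  forall x y, reach E x y.

Definition conductance (E : V -> V -> Prop) (mu : V -> V -> R) : Prop :=
  (forall x y, mu x y = mu y x) /\
  (forall x y, E x y -> 0 < mu x y) /\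
  (forall x y, ~ E x y -> mu x y = 0).

Definition is_metric (d : V -> V -> R) : Prop :=
  (forall x y, 0 <= d x y) /\ (forall x y, d x y = 0 <-> x = y) /\
  (forall x y, d x y = d y x) /\ (forall x y z, d x z <= d x y + d y z).

Definition muv (E : V -> V -> Prop) (mu : V -> V -> R) (x : V) : \bar R :=
  \esum_(y in [set y | E x y]) (mu x y)%:E.

Definition ball_d (d : V -> V -> R) (x : V) (r : R) : set V :=
  [set y | d x y < r].

Definition vol (E : V -> V -> Prop) (mu : V -> V -> R) (d : V -> V -> R)
  (x : V) (r : R) : \bar R :=
  \esum_(y in ball_d d x r) muv E mu y.

Definition ptrans (E : V -> V -> Prop) (mu : V -> V -> R) (x y : V) : \bar R :=
  ((mu x y)%:E / muv E mu x)%E.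

Fixpoint pn (E : V -> V -> Prop) (mu : V -> V -> R) (n : nat) (x y : V)
  : \bar R :=
  match n with
  | 0 => (if `[< x = y >] then 1 else 0)%E
  | m.+1 => \esum_(z in [set: V]) (ptrans E mu x z * pn E mu m z y)%E
  end.

Definition hn (E : V -> V -> Prop) (mu : V -> V -> R) (n : nat) (x y : V)
  : \bar R := (pn E mu n x y / muv E mu y)%E.

Fixpoint stay (E : V -> V -> Prop) (mu : V -> V -> R) (B : set V) (n : nat)
  (z : V) : \bar R :=
  match n with
  | 0 => (if `[< B z >] then 1 else 0)%E
  | m.+1 => (if `[< B z >] then
               \esum_(w in [set: V]) (ptrans E mu z w * stay E mu B m w)
             else 0)%E
  end.

(* E^x[tau(x,r)] with tau(x,r) = min{n : X_n notin B_d(x,r)}, an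
   N u {oo}-valued variable, so E^x[tau] = sum_{n>=0} P^x(tau > n)
   and {tau > n} = {X_0,...,X_n in B_d(x,r)}. *)
Definition exit_time_mean (E : V -> V -> Prop) (mu : V -> V -> R)
  (d : V -> V -> R) (x : V) (r : R) : \bar R :=
  \esum_(n in [set: nat]) stay E mu (ball_d d x r) n x.

End Walk.

From mathcomp Require Import all_boot all_order all_algebra.
From mathcomp Require Import all_classical all_reals all_analysis.
From mathcomp Require Import ring lra.
Set Implicit Arguments. Unset Strict Implicit. Unset Printing Implicit Defensive.
Import Order.TTheory GRing.Theory Num.Theory.
Local Open Scope classical_set_scope.
Local Open Scope ring_scope.

(* Let r = K n^(1/beta) with K large and B = B_d(x, r).  Stopping the walk at
   time n and restarting it (Markov property) gives
   E^x[tau_B] <= n + P^x(tau_B > n) sup_{y in B} E^y[tau_B]; as B lies inside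
   B_d(y, 2r), the two bounds of E(beta) force P^x(X_n in B) >= P^x(tau_B > n) >= s
   for a constant s > 0.  By reversibility and Chapman-Kolmogorov,
   h_2n(x,x) = sum_y p_n(x,y)^2 / mu_y, which Cauchy-Schwarz bounds below by
   P^x(X_n in B)^2 / V_d(x,r); finally V_d(x,r) <= C K^alpha V_d(x, n^(1/beta))
   by VG(alpha). *)

Lemma sqr_sum_le_sum_sqr_div (R : realFieldType) (I : Type) (s : seq I) (a m : I -> R) :
  (forall i, 0 < m i) ->
  (\sum_(i <- s) a i) ^+ 2 <= (\sum_(i <- s) a i ^+ 2 / m i) * \sum_(i <- s) m i.
Proof.
move=> m_gt0; case: s => [|i0 s]; first by rewrite !big_nil expr0n /= mulr0.
set A := \sum_(i <- _) a i; set Q := \sum_(i <- _) _ / _; set M := \sum_(i <- _) m i.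
have M_gt0 : 0 < M.
  rewrite /M big_cons; apply: (lt_le_trans (m_gt0 i0)); rewrite lerDl.
  by apply: sumr_ge0 => i _; exact: ltW.
pose t := A / M.
(* the weighted variance of [a_i / m_i] around its mean [t] is nonnegative *)
have var_ge0 : 0 <= \sum_(i <- i0 :: s) m i * (a i / m i - t) ^+ 2.
  by apply: sumr_ge0 => i _; rewrite mulr_ge0 ?sqr_ge0 // ltW.
have var_expand :
    \sum_(i <- i0 :: s) m i * (a i / m i - t) ^+ 2 = Q - 2 * t * A + t ^+ 2 * M.
  rewrite /Q /A /M !mulr_sumr -sumrN -!big_split /=; apply: eq_bigr => i _.
  have mi : m i != 0 by rewrite gt_eqF.
  by field.
have tM : t * M = A by rewrite /t divfK // gt_eqF.
rewrite var_expand in var_ge0; nra.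
Qed.

Section esum_lemmas.
Variables (R : realType) (T : choiceType).
Local Open Scope ereal_scope.

Lemma esumZl (I : set T) (a : T -> \bar R) (c : R) :
  (0 <= c)%R -> (forall i, I i -> 0 <= a i) ->
  \esum_(i in I) (c%:E * a i) = c%:E * \esum_(i in I) a i.
Proof.
move=> c0 a0; rewrite /esum -ereal_supZl //; last first.
  by apply/set0P; exists 0; exists set0; [exact: fsets_set0|rewrite fsbig_set0].
have sumZ X : fsets I X -> \sum_(i \in X) (c%:E * a i) = c%:E * \sum_(i \in X) a i.
  case=> finX XI; rewrite !fsbig_finite//= big_seq [in RHS]big_seq ge0_sume_distrr//.
  by move=> i; rewrite in_fset_set// inE => /XI /a0.
congr ereal_sup; apply/seteqP; split => x /=.
  by move=> [X XI <-]; exists (\sum_(i \in X) a i); [exists X | rewrite sumZ].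
by move=> [_ [X XI <-] <-]; exists X => //; rewrite sumZ.
Qed.

Lemma esumZr (I : set T) (a : T -> \bar R) (c : R) :
  (0 <= c)%R -> (forall i, I i -> 0 <= a i) ->
  \esum_(i in I) (a i * c%:E) = (\esum_(i in I) a i) * c%:E.
Proof.
by move=> c0 a0; rewrite muleC -esumZl//; apply: eq_esum => i _; rewrite muleC.
Qed.

Lemma exchange_esum (T' : choiceType) (I : set T) (J : set T') (a : T -> T' -> \bar R) :
  (forall i j, I i -> J j -> 0 <= a i j) ->
  \esum_(i in I) \esum_(j in J) a i j = \esum_(j in J) \esum_(i in I) a i j.
Proof.
move=> a0; rewrite (@esum_esum _ _ _ I (fun=> J))// (@esum_esum _ _ _ J (fun=> I)); last first.
  by move=> j i Jj Ii; exact: a0.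
rewrite (reindex_esum (J `*` I) _ (fun x => (x.2, x.1)))//; split=> //=.
- by move=> [i j] [/=].
- by move=> [i1 i2] [j1 j2] /= _ _ [] -> ->.
- by move=> [i1 i2] [Pi1 Qi2] /=; exists (i2, i1).
Qed.

Lemma esum_ge_term (I : set T) (a : T -> \bar R) x : I x -> a x <= \esum_(i in I) a i.
Proof.
move=> Ix; apply: esum_ge; exists [set x]; last by rewrite fsbig_set1.
by split; [exact: finite_set1 | move=> y ->].
Qed.

Lemma esum_deltal (x : T) (f : T -> \bar R) : (forall i, 0 <= f i) ->
  \esum_(z in [set: T]) ((if `[< x = z >] then 1 else 0) * f z) = f x.
Proof.
move=> f0; rewrite (esumID [set x]); last by move=> i _; case: asboolP; rewrite ?mul1e ?mul0e.
rewrite setTI esum_set1; last by rewrite asboolT ?mul1e.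
rewrite asboolT // mul1e esum1 ?adde0// => i [_ /= ix].
by rewrite asboolF ?mul0e// => xi; apply: ix; rewrite xi.
Qed.

Lemma esum_deltar (x : T) (f : T -> \bar R) : (forall i, 0 <= f i) ->
  \esum_(z in [set: T]) (f z * (if `[< z = x >] then 1 else 0)) = f x.
Proof.
move=> f0; rewrite -(esum_deltal x f0); apply: eq_esum => z _; rewrite muleC.
by rewrite (@asbool_equiv_eq (z = x) (x = z)).
Qed.

End esum_lemmas.

Lemma ediv_le_of_le_mul (R : realType) (a : R) (v h : \bar R) :
  (0 < v)%E -> (0 <= h)%E -> (a%:E <= h * v)%E -> (a%:E / v <= h)%E.
Proof.
case: v => [v| |] //; last by rewrite invey mule0.
rewrite lte_fin => v_gt0 _ le_ahv.
by rewrite inver gt_eqF // lee_pdivrMr.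
Qed.

Lemma ball_d_sub (R : realType) (V : countType) (d : V -> V -> R) x y r :
  is_metric d -> ball_d d x r y -> ball_d d x r `<=` ball_d d y (2 * r).
Proof.
case=> _ [_ [d_sym d_tri]]; rewrite /ball_d /= => dxy z /= dxz.
by apply: le_lt_trans (d_tri y x z) _; rewrite d_sym; lra.
Qed.

Section random_walk.
Variables (R : realType) (V : countType) (E : V -> V -> Prop) (mu : V -> V -> R).
Hypothesis mu_ge0 : forall x y, 0 <= mu x y.
Hypothesis mu_sym : forall x y, mu x y = mu y x.
Hypothesis mu_out : forall x y, ~ E x y -> mu x y = 0.
Hypothesis muv_gt0 : forall x, (0 < muv E mu x)%E.
Hypothesis muv_fin : forall x, (muv E mu x < +oo)%E.
Local Open Scope ereal_scope.

Definition mass x : R := fine (muv E mu x).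

Lemma muvE x : muv E mu x = (mass x)%:E.
Proof. by rewrite /mass fineK // ge0_fin_numE ?muv_fin // ltW. Qed.

Lemma mass_gt0 x : (0 < mass x)%R.
Proof. by rewrite -lte_fin -muvE. Qed.

Definition prob x y : R := mu x y / mass x.

Lemma prob_ge0 x y : (0 <= prob x y)%R.
Proof. by rewrite divr_ge0 // ltW // mass_gt0. Qed.

Lemma ptransE x y : ptrans E mu x y = (prob x y)%:E.
Proof. by rewrite /ptrans muvE inver gt_eqF ?mass_gt0 // -EFinM. Qed.

Lemma ptrans_ge0 x y : 0 <= ptrans E mu x y.
Proof. by rewrite ptransE lee_fin prob_ge0. Qed.

Lemma esum_prob x : \esum_(z in [set: V]) (prob x z)%:E = 1.
Proof.
have esum_mu : \esum_(z in [set: V]) (mu x z)%:E = (mass x)%:E.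
  rewrite -muvE /muv [RHS]esum_mkcond; apply: eq_esum => z _.
  by case: ifPn => // /negP; rewrite inE => /mu_out ->.
under eq_esum do rewrite EFinM.
rewrite esumZr ?esum_mu -?EFinM ?divff ?gt_eqF ?mass_gt0 //.
- by rewrite invr_ge0 ltW // mass_gt0.
- by move=> *; rewrite lee_fin.
Qed.

Lemma esum_prob_le x (f : V -> \bar R) : (forall z, 0 <= f z <= 1) ->
  \esum_(z in [set: V]) ((prob x z)%:E * f z) <= 1.
Proof.
move=> f01; rewrite -(esum_prob x); apply: le_esum => z _.
by rewrite -[X in _ <= X]mule1 lee_wpmul2l ?lee_fin ?prob_ge0 //; case/andP: (f01 z).
Qed.

Lemma pn_ge0 n x y : 0 <= pn E mu n x y.
Proof.
elim: n x y => [|n IH] x y /=; first by case: asboolP.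
by apply: esum_ge0 => z _; rewrite mule_ge0 ?ptrans_ge0.
Qed.

Lemma pn_le1 n x y : pn E mu n x y <= 1.
Proof.
elim: n x y => [|n IH] x y /=; first by case: asboolP.
under eq_esum do rewrite ptransE.
by apply: esum_prob_le => z; rewrite pn_ge0 IH.
Qed.

Lemma pnE n x y : pn E mu n x y = (fine (pn E mu n x y))%:E.
Proof. by rewrite fineK // ge0_fin_numE ?pn_ge0 // (le_lt_trans (pn_le1 _ _ _) (ltry _)). Qed.

Lemma pnD m k x y :
  pn E mu (m + k) x y = \esum_(z in [set: V]) (pn E mu m x z * pn E mu k z y).
Proof.
elim: m x y => [|m IH] x y.
  by rewrite add0n /= esum_deltal // => z; exact: pn_ge0.
rewrite addSn /=.
transitivity (\esum_(z in [set: V]) \esum_(w in [set: V])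
   ((prob x z)%:E * (pn E mu m z w * pn E mu k w y))).
  apply: eq_esum => z _; rewrite IH ptransE esumZl ?prob_ge0 // => w _.
  by rewrite mule_ge0 // pn_ge0.
rewrite exchange_esum; last by move=> *; rewrite !mule_ge0 ?pn_ge0 // lee_fin prob_ge0.
apply: eq_esum => w _; rewrite [pn E mu k w y]pnE /= -esumZr; last first.
- by move=> z _; rewrite mule_ge0 ?pn_ge0 ?ptrans_ge0.
- by rewrite fine_ge0 // pn_ge0.
by apply: eq_esum => z _; rewrite ptransE muleA.
Qed.

Lemma pn1 x y : pn E mu 1 x y = ptrans E mu x y.
Proof. by rewrite /= esum_deltar // => z; exact: ptrans_ge0. Qed.

Lemma pn_reversible n x y : (mass x)%:E * pn E mu n x y = (mass y)%:E * pn E mu n y x.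
Proof.
elim: n x y => [|n IH] x y.
  rewrite /=; case: (pselect (x = y)) => [->//|xy].
  by rewrite !asboolF ?mule0 // => /esym.
have -> : pn E mu n.+1 y x = \esum_(z in [set: V]) (pn E mu n y z * ptrans E mu z x).
  by rewrite -addn1 pnD; apply: eq_esum => z _; rewrite pn1.
rewrite /= -!esumZl ?(ltW (mass_gt0 _)) //; first last.
  1,2: by move=> *; rewrite mule_ge0 ?pn_ge0 ?ptrans_ge0.
apply: eq_esum => z _.
(* detailed balance [mass x * prob x z = mu x z = mu z x = mass z * prob z x] *)
rewrite !ptransE muleA -EFinM /prob mulrC divfK ?gt_eqF ?mass_gt0 //.
have mu_zx : mu z x = (mu z x / mass z * mass z)%R by rewrite divfK // gt_eqF // mass_gt0.
rewrite mu_sym {1}mu_zx EFinM -muleA IH muleCA; congr (_ * _); exact: muleC.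
Qed.

Lemma hnE n x y : hn E mu n x y = (fine (pn E mu n x y) / mass y)%:E.
Proof. by rewrite /hn muvE inver gt_eqF ?mass_gt0 // pnE -EFinM. Qed.

Lemma hn_ge0 n x y : 0 <= hn E mu n x y.
Proof. by rewrite hnE lee_fin divr_ge0 ?fine_ge0 ?pn_ge0 // ltW // mass_gt0. Qed.

Lemma hn_diag n x :
  hn E mu (n + n) x x = \esum_(y in [set: V]) ((fine (pn E mu n x y)) ^+ 2 / mass y)%:E.
Proof.
rewrite /hn pnD muvE inver gt_eqF ?mass_gt0 // -esumZr; last first.
- by move=> *; rewrite mule_ge0 ?pn_ge0.
- by rewrite invr_ge0 ltW // mass_gt0.
apply: eq_esum => y _.
have rev_xy := pn_reversible n x y.
rewrite (pnE n x y) (pnE n y x) -!EFinM in rev_xy; case: rev_xy => rev_xy.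
rewrite [in LHS](pnE n x y) [in LHS](pnE n y x) -!EFinM; congr EFin.
have mx : mass x != 0%R by rewrite gt_eqF // mass_gt0.
have my : mass y != 0%R by rewrite gt_eqF // mass_gt0.
have -> : fine (pn E mu n y x) = (mass x * fine (pn E mu n x y) / mass y)%R.
  by rewrite rev_xy mulrC mulKf.
by field; rewrite mx my.
Qed.

Lemma hn_diag_ge n x (B : set V) (s : R) : (0 <= s)%R ->
  s%:E < \esum_(y in B) pn E mu n x y ->
  (s ^+ 2)%:E <= hn E mu (n + n) x x * \esum_(y in B) muv E mu y.
Proof.
move=> s_ge0 /ereal_sup_gt [_ [X [finX XB] <-]] lt_sX.
set a := fun y => fine (pn E mu n x y).
pose Xs := finmap.enum_fset (fset_set X).
have sum_pn : \sum_(y \in X) pn E mu n x y = (\sum_(y <- Xs) a y)%:E.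
  by rewrite fsbig_finite //= -sumEFin; apply: eq_bigr => y _; exact: pnE.
rewrite sum_pn lte_fin in lt_sX.
have le_hn : (\sum_(y <- Xs) a y ^+ 2 / mass y)%:E <= hn E mu (n + n) x x.
  by rewrite hn_diag; apply: esum_ge; exists X; rewrite // fsbig_finite //= sumEFin.
have le_vol : (\sum_(y <- Xs) mass y)%:E <= \esum_(y in B) muv E mu y.
  apply: esum_ge; exists X; first by split.
  by rewrite fsbig_finite //= -sumEFin; under [X in _ <= X]eq_bigr do rewrite muvE.
apply: le_trans _ (lee_pmul _ _ le_hn le_vol); rewrite ?lee_fin; first last.
- by rewrite sumr_ge0 // => y _; rewrite ltW // mass_gt0.
- by rewrite sumr_ge0 // => y _; rewrite divr_ge0 ?sqr_ge0 // ltW // mass_gt0.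
apply: le_trans _ (sqr_sum_le_sum_sqr_div _ _ mass_gt0).
by rewrite ler_sqr ?nnegrE // ltW // (le_lt_trans s_ge0).
Qed.

Lemma stay_ge0 B n x : 0 <= stay E mu B n x.
Proof.
elim: n x => [|n IH] x /=; first by case: asboolP.
case: asboolP => // _; apply: esum_ge0 => z _.
by rewrite mule_ge0 ?ptrans_ge0.
Qed.

Lemma stay_le1 B n x : stay E mu B n x <= 1.
Proof.
elim: n x => [|n IH] x /=; first by case: asboolP.
case: asboolP => // _; under eq_esum do rewrite ptransE.
by apply: esum_prob_le => z; rewrite stay_ge0 IH.
Qed.

Lemma stayE B n x : stay E mu B n x = (fine (stay E mu B n x))%:E.
Proof.
by rewrite fineK // ge0_fin_numE ?stay_ge0 // (le_lt_trans (stay_le1 _ _ _) (ltry _)).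
Qed.

Lemma stay_out B n x : ~ B x -> stay E mu B n x = 0.
Proof. by move=> Bx; case: n => [|n] /=; rewrite asboolF. Qed.

Lemma le_stay B B' n x : B `<=` B' -> stay E mu B n x <= stay E mu B' n x.
Proof.
move=> BB'; elim: n x => [|n IH] x; (have [Bx|Bx] := pselect (B x);
  last by rewrite stay_out // stay_ge0).
- by rewrite /= !asboolT //; exact: BB'.
rewrite /= !asboolT //; last exact: BB'.
by apply: le_esum => z _; rewrite ptransE lee_wpmul2l ?lee_fin ?prob_ge0.
Qed.

Lemma stay_le_pn B n x : stay E mu B n x <= \esum_(y in B) pn E mu n x y.
Proof.
elim: n x => [|n IH] x; (have [Bx|Bx] := pselect (B x);
  last by rewrite stay_out // esum_ge0 // => y _; exact: pn_ge0).
- by rewrite /= asboolT //; apply: le_trans (esum_ge_term _ Bx); rewrite asboolT.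
rewrite /= asboolT //.
apply: (@le_trans _ _ (\esum_(z in [set: V]) \esum_(y in B) ((prob x z)%:E * pn E mu n z y))).
  apply: le_esum => z _; rewrite ptransE esumZl ?prob_ge0 //; last by move=> *; exact: pn_ge0.
  by rewrite lee_wpmul2l // lee_fin prob_ge0.
rewrite exchange_esum; last by move=> *; rewrite mule_ge0 ?pn_ge0 // lee_fin prob_ge0.
by apply: le_esum => y _; apply: le_esum => z _; rewrite ptransE.
Qed.

(* [stay_tail B n x = E^x[(tau_B - n)^+]], where [tau_B] is the exit time of [B]. *)
Definition stay_tail B n x := \esum_(k in [set: nat]) stay E mu B (k + n) x.

Lemma stay_tailS B n x : stay_tail B n x = stay E mu B n x + stay_tail B n.+1 x.
Proof.
rewrite /stay_tail (esumID [set 0%N]); last by move=> *; exact: stay_ge0.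
rewrite setTI esum_set1 ?stay_ge0 // add0n; congr (_ + _).
rewrite (reindex_esum [set: nat] _ S); last first.
  split=> [k _ //|a b _ _ [] //|k [_ /= /eqP k0]].
  by exists k.-1 => //; rewrite prednK // lt0n.
by apply: eq_esum => k _; rewrite addSnnS.
Qed.

Lemma esum_stay_le_tail B n x :
  \esum_(k in [set: nat]) stay E mu B k x <= n%:R%:E + stay_tail B n x.
Proof.
elim: n => [|n IH].
  by rewrite add0e /stay_tail; under [X in _ <= X]eq_esum do rewrite addn0.
apply: (le_trans IH); rewrite stay_tailS addeA leeD2r // -natr1 EFinD leeD2l //.
exact: stay_le1.
Qed.

(* Markov property at time [n]: a path that survived [n] steps restarts from a
   point of [B], from which it survives at most [M] further steps on average. *)
Lemma stay_tail_le B (M : R) n x : (0 <= M)%R ->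
  (forall y, B y -> \esum_(k in [set: nat]) stay E mu B k y <= M%:E) ->
  stay_tail B n x <= stay E mu B n x * M%:E.
Proof.
move=> M_ge0 exit_le; elim: n x => [|n IH] x; (have [Bx|Bx] := pselect (B x);
  last by rewrite /stay_tail esum1 ?stay_out ?mul0e // => k _; rewrite stay_out).
  by rewrite /stay_tail; under eq_esum do rewrite addn0; rewrite /= asboolT // mul1e exit_le.
rewrite /stay_tail.
have -> : \esum_(k in [set: nat]) stay E mu B (k + n.+1) x =
    \esum_(k in [set: nat]) \esum_(w in [set: V]) ((prob x w)%:E * stay E mu B (k + n) w).
  by apply: eq_esum => k _; rewrite addnS /= asboolT //; apply: eq_esum => w _; rewrite ptransE.
rewrite exchange_esum; last by move=> *; rewrite mule_ge0 ?stay_ge0 // lee_fin prob_ge0.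
apply: (@le_trans _ _ (\esum_(w in [set: V]) ((prob x w)%:E * (stay E mu B n w * M%:E)))).
  apply: le_esum => w _; rewrite esumZl ?prob_ge0 //; last by move=> *; exact: stay_ge0.
  by rewrite lee_wpmul2l ?lee_fin ?prob_ge0 ?IH.
rewrite /= asboolT // -esumZr //; last by move=> *; rewrite mule_ge0 ?stay_ge0 ?ptrans_ge0.
by apply: le_esum => w _; rewrite ptransE muleA.
Qed.

Lemma esum_stay_le B n x (M : R) : (0 <= M)%R ->
  (forall y, B y -> \esum_(k in [set: nat]) stay E mu B k y <= M%:E) ->
  \esum_(k in [set: nat]) stay E mu B k x <= (n%:R + fine (stay E mu B n x) * M)%:E.
Proof.
move=> M_ge0 exit_le; apply: le_trans (esum_stay_le_tail B n x) _.
by rewrite EFinD leeD2l // EFinM -stayE stay_tail_le.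
Qed.

Lemma stay_ball_ge (d : V -> V -> R) (beta c1 c2 : R) x n r :
  is_metric d -> (0 < c2)%R -> (0 < r)%R ->
  (forall y, exit_time_mean E mu d y (2 * r) <= (c2 * (2 * r) `^ beta)%:E) ->
  (c1 * r `^ beta)%:E <= exit_time_mean E mu d x r ->
  (2 * n%:R <= c1 * r `^ beta)%R ->
  (c1 / (2 * (c2 * 2 `^ beta)) <= fine (stay E mu (ball_d d x r) n x))%R.
Proof.
move=> d_metric c2_gt0 r_gt0 exit_up exit_low two_n.
set B := ball_d d x r; set t := (c2 * 2 `^ beta)%R.
have t_gt0 : (0 < t)%R by rewrite mulr_gt0 ?powR_gt0.
have rb_gt0 : (0 < r `^ beta)%R by rewrite powR_gt0.
have M_eq : (c2 * (2 * r) `^ beta = t * r `^ beta)%R by rewrite powRM ?ler0n ?ltW // mulrA.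
have exit_le y : B y -> \esum_(k in [set: nat]) stay E mu B k y <= (t * r `^ beta)%:E.
  move=> By; rewrite -M_eq; apply: le_trans (exit_up y); apply: le_esum => k _.
  exact/le_stay/ball_d_sub.
have := le_trans exit_low (esum_stay_le n x (ltW (mulr_gt0 t_gt0 rb_gt0)) exit_le).
rewrite lee_fin ler_pdivrMr ?mulr_gt0 // => exit_ineq; nra.
Qed.

Lemma hn_diag_ge_vol (d : V -> V -> R) x n r (s : R) : (0 < s)%R ->
  (s <= fine (stay E mu (ball_d d x r) n x))%R ->
  ((s / 2) ^+ 2)%:E <= hn E mu (2 * n) x x * vol E mu d x r.
Proof.
move=> s_gt0 le_s; rewrite mul2n -addnn; apply: hn_diag_ge; first by rewrite divr_ge0 ?ltW.
apply: lt_le_trans (stay_le_pn _ n x); rewrite stayE lte_fin.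
by apply: lt_le_trans le_s; rewrite ltr_pdivrMr //; lra.
Qed.

Lemma vol_gt0 (d : V -> V -> R) x r : is_metric d -> (0 < r)%R -> 0 < vol E mu d x r.
Proof.
case=> _ [d_eq0 _] r_gt0; apply: lt_le_trans (muv_gt0 x) (esum_ge_term _ _).
by rewrite /ball_d /= (proj2 (d_eq0 x x) erefl).
Qed.

Lemma hn_diag_ge_inv_vol (d : V -> V -> R) (alpha beta r0 c1 c2 C K : R) :
  is_metric d -> (0 < beta)%R -> (0 < c1)%R -> (0 < c2)%R -> (0 < C)%R ->
  (1 < K)%R -> (r0 < K)%R -> (2 <= c1 * K `^ beta)%R ->
  (forall x r, (r0 < r)%R -> (c1 * r `^ beta)%:E <= exit_time_mean E mu d x r) ->
  (forall x r, (r0 < r)%R -> exit_time_mean E mu d x r <= (c2 * r `^ beta)%:E) ->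
  (forall x r s, (0 < s)%R -> (s < r)%R ->
     vol E mu d x r <= (C * (r / s) `^ alpha)%:E * vol E mu d x s) ->
  forall x n, (1 <= n)%N ->
  ((c1 / (2 * (c2 * 2 `^ beta)) / 2) ^+ 2 / (C * K `^ alpha))%:E
     / vol E mu d x (n%:R `^ beta^-1)%R <= hn E mu (2 * n) x x.
Proof.
move=> d_metric beta_gt0 c1_gt0 c2_gt0 C_gt0 K_gt1 r0_ltK c1K exit_low exit_up vg x n n_ge1.
set s := (c1 / (2 * (c2 * 2 `^ beta)))%R; set rho := (n%:R `^ beta^-1)%R.
have rho_ge1 : (1 <= rho)%R.
  have binv_ge0 : (0 <= beta^-1)%R by rewrite invr_ge0 ltW.
  have := @ge0_ler_powR R (beta^-1)%R binv_ge0 1%R n%:R.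
  by rewrite powR1 => ->; rewrite ?nnegrE ?ler1n.
set r := (K * rho)%R.
have [rho_lt_r r0_lt_r] : (rho < r /\ r0 < r)%R by split; rewrite /r; nra.
have r_gt0 : (0 < r)%R by lra.
have r0_lt_2r : (r0 < 2 * r)%R by lra.
have r_pow : (r `^ beta = K `^ beta * n%:R)%R.
  have [K_ge0 rho_ge0] : (0 <= K /\ 0 <= rho)%R by split; lra.
  by rewrite powRM // /rho -powRrM mulVf ?gt_eqF // powRr1 ?ler0n.
have two_n : (2 * n%:R <= c1 * r `^ beta)%R.
  by rewrite r_pow mulrA ler_pM2r ?ltr0n.
have le_s := stay_ball_ge d_metric c2_gt0 r_gt0 (fun y => exit_up y _ r0_lt_2r)
  (exit_low x r r0_lt_r) two_n.
have s_gt0 : (0 < s)%R by rewrite divr_gt0 // !mulr_gt0 // powR_gt0.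
have le_hn := hn_diag_ge_vol s_gt0 le_s.
have := vg x r rho (lt_le_trans ltr01 rho_ge1) rho_lt_r; rewrite mulfK ?gt_eqF //; last lra.
move=> le_vol; apply: ediv_le_of_le_mul.
- by rewrite vol_gt0 //; lra.
- exact: hn_ge0.
rewrite mulrC EFinM lee_pdivrMl ?mulr_gt0 ?powR_gt0 //; last lra.
by apply: le_trans le_hn _; rewrite muleCA lee_wpmul2l ?hn_ge0.
Qed.

End random_walk.

Lemma reach_has_edge (V : countType) (E : V -> V -> Prop) x y :
  reach E x y -> x <> y -> exists z, E x z.
Proof. by case=> [//|a z b Eaz _ _]; exists z. Qed.

Section graph.
Variables (R : realType) (V : countType) (E : V -> V -> Prop) (mu : V -> V -> R).
Hypothesis mu_cond : conductance E mu.

Lemma conductance_ge0 x y : 0 <= mu x y.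
Proof.
have [_ [mu_pos mu_out]] := mu_cond.
by have [/mu_pos/ltW|/mu_out->] := pselect (E x y).
Qed.

Lemma muv_gt0_connected : connected_graph E -> (exists a b : V, a <> b) ->
  forall x, (0 < muv E mu x)%E.
Proof.
move=> E_conn [a [b ab]] x.
have [y xy] : exists y, x <> y.
  by have [->|xa] := pselect (x = a); [exists b | exists a].
have [z Exz] := reach_has_edge (E_conn x y) xy.
apply: lt_le_trans (esum_ge_term (fun w => (mu x w)%:E) Exz).
by rewrite lte_fin; have [_ [/(_ x z Exz) ->]] := mu_cond.
Qed.

(* Without edges the transition kernel vanishes, so only the [n = 0] term of the
   exit-time series survives. *)
Lemma exit_time_mean_single_vertex (d : V -> V -> R) x r :
  simple_graph E -> (forall y, y = x) -> (exit_time_mean E mu d x r <= 1)%E.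
Proof.
move=> [E_irr _] single.
have ptrans0 a b : ptrans E mu a b = 0%E.
  have [_ [_ mu_out]] := mu_cond.
  by rewrite /ptrans mu_out ?mul0e // (single a) (single b); exact: E_irr.
have stayS k z : stay E mu (ball_d d x r) k.+1 z = 0%E.
  by rewrite /=; case: asboolP => // _; apply: esum1 => w _; rewrite ptrans0 mul0e.
rewrite /exit_time_mean (esumID [set 0%N]); last first.
  by move=> [|k] _; [rewrite /=; case: asboolP | rewrite stayS].
rewrite setTI esum_set1; last by rewrite /=; case: asboolP.
rewrite esum1 ?adde0; first by rewrite /=; case: asboolP.
by move=> [|k] [_ /= k0]; [exfalso; exact: k0 | exact: stayS].
Qed.

End graph.

Lemma exists_powR_ge (R : realType) (m c beta r0 : R) :
  0 <= m -> 0 < c -> 0 < beta -> 0 < r0 ->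
  exists K, [/\ 1 < K, r0 < K & m <= c * K `^ beta].
Proof.
move=> m_ge0 c_gt0 beta_gt0 r0_gt0.
have root_ge0 := powR_ge0 (m / c) beta^-1.
have root_pow : ((m / c) `^ beta^-1) `^ beta = m / c.
  by rewrite -powRrM mulVf ?gt_eqF // powRr1 // divr_ge0 // ltW.
move: root_ge0 root_pow; set q := (m / c) `^ beta^-1 => q_ge0 q_pow.
exists (1 + r0 + q); split; try lra.
rewrite -ler_pdivrMl // mulrC -q_pow.
by apply: ge0_ler_powR; rewrite ?nnegrE; lra.
Qed.

Theorem proposition6p3 (R : realType) (V : countType)
  (E : V -> V -> Prop) (mu : V -> V -> R) (d : V -> V -> R)
  (alpha beta : R) :
  simple_graph E -> connected_graph E -> conductance E mu ->
  (forall x : V, (muv E mu x < +oo)%E) ->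
  is_metric d ->
  0 < beta ->
  (* E(beta) *)
  (exists r0 : R, 0 < r0 /\ exists c1 c2 : R, 0 < c1 /\ 0 < c2 /\
     forall (x : V) (r : R), r0 < r ->
       ((c1 * r `^ beta)%:E <= exit_time_mean E mu d x r)%E /\
       (exit_time_mean E mu d x r <= (c2 * r `^ beta)%:E)%E) ->
  (* VG(alpha) *)
  (exists C : R, 0 < C /\
     forall (x : V) (r s : R), 0 < s -> s < r ->
       (vol E mu d x r <= (C * (r / s) `^ alpha)%:E * vol E mu d x s)%E) ->
  exists c : R, 0 < c /\
    forall (x : V) (n : nat), (1 <= n)%N ->
      (c%:E / vol E mu d x (n%:R `^ beta^-1) <= hn E mu (2 * n) x x)%E.
Proof.
move=> E_simple E_conn mu_cond muv_fin d_metric beta_gt0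
  [r0 [r0_gt0 [c1 [c2 [c1_gt0 [c2_gt0 exit_bounds]]]]]] [C [C_gt0 vg]].
have exit_low x r (r0_lt_r : r0 < r) := (exit_bounds x r r0_lt_r).1.
have exit_up x r (r0_lt_r : r0 < r) := (exit_bounds x r r0_lt_r).2.
have [K [K_gt1 r0_ltK c1K]] := exists_powR_ge (ler0n R 2) c1_gt0 beta_gt0 r0_gt0.
have [nontrivial|single] := pselect (exists a b : V, a <> b); last first.
  exists 1; split=> // x n _; exfalso.
  have single_x y : y = x by apply: contrapT => yx; apply: single; exists y, x.
  have := exit_time_mean_single_vertex mu_cond d K E_simple single_x.
  by move/(le_trans (exit_low x K r0_ltK)); rewrite lee_fin; lra.
have [mu_sym [_ mu_out]] := mu_cond.
exists (((c1 / (2 * (c2 * 2 `^ beta))) / 2) ^+ 2 / (C * K `^ alpha)); split.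
  by rewrite divr_gt0 ?exprn_gt0 ?divr_gt0 ?mulr_gt0 ?powR_gt0 //; lra.
exact: (hn_diag_ge_inv_vol (conductance_ge0 mu_cond) mu_sym mu_out
  (muv_gt0_connected mu_cond E_conn nontrivial) muv_fin d_metric beta_gt0 c1_gt0 c2_gt0
  C_gt0 K_gt1 r0_ltK c1K exit_low exit_up vg).
Qed.
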